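(* Let $\Omega=\mathbb{R}^{\mathbb{N}}$ with canonical process $(X_t)_{t\in\mathbb{N}}$, natural filtration $\mathcal{F}_t=\sigma(X_1,\dots,X_t)$ ($\mathcal{F}_0$ trivial), $\mathcal{F}=\sigma(\bigcup_t\mathcal{F}_t)$. Let $\mathcal{P}^\dagger$ be the set of all probability measures $\mathbb{P}$ on $\mathcal{F}$ such that for every $t\in\mathbb{N}$ the conditional mean $\mu_t=\mathbb{E}_{\mathbb{P}}[X_t\mid\mathcal{F}_{t-1}]$ exists and is finite, $\sum_{i=1}^t\mu_i\le0$ $\mathbb{P}$-a.s., and $\mathbb{E}_{\mathbb{P}}[e^{\lambda(X_t-\mu_t)}\mid\mathcal{F}_{t-1}]\le e^{\lambda^2/2}$ $\mathbb{P}$-a.s. for all $\lambda\in\mathbb{R}$. Let $A^{>0}=\big\{\limsup_{t\to\infty}\frac1t\sum_{s=1}^tX_s>0\big\}$. Then $\mu^*(A^{>0})=0$ (with $\mu^*$ computed with respect to $\mathcal{P}^\dagger$); in particular this also holds for the smaller family $\mathcal{P}^{\le0}\subseteq\mathcal{P}^\dagger$ in which each $\mu_t\le0$.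
   Context: Stopping times are with respect to the filtration above (values in $\mathbb{N}_0\cup\{\infty\}$) and $\mathcal{T}$ is the set of all stopping times. Inverse-capital measure with respect to a family $\mathcal{Q}$: $\mu^*(B) = \inf_{\tau\in\mathcal{T}:\, B\subseteq\{\tau<\infty\}} \sup_{\mathbb{P}\in\mathcal{Q}} \mathbb{P}(\tau<\infty)$ for $B\subseteq\Omega$. *)

From HB Require Import structures.
From mathcomp Require Import all_boot all_order all_algebra.
From mathcomp Require Import all_classical all_reals all_analysis.
From mathcomp Require Import measurable_realfun.
Set Implicit Arguments. Unset Strict Implicit. Unset Printing Implicit Defensive.
Import Order.TTheory GRing.Theory Num.Theory.
Local Open Scope classical_set_scope.
Local Open Scope ring_scope.

(* Omega = R^N.  A path w : nat -> R encodes X_t = w (t-1), t = 1,2,... *)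
Definition Omega0 (R : realType) := nat -> R.
HB.instance Definition _ (R : realType) := gen_eqMixin (Omega0 R).
HB.instance Definition _ (R : realType) := gen_choiceMixin (Omega0 R).
HB.instance Definition _ (R : realType) := isPointed.Build (Omega0 R) (fun _ => 0%R).

Section Defs.
Variable R : realType.
Local Notation Omega := (Omega0 R).

Definition X (t : nat) (w : Omega) : R := w t.-1.

Definition gen (t : nat) : set (set Omega) :=
  [set B | exists s, exists A : set R,
      [/\ (1 <= s)%N, (s <= t)%N, measurable A & B = X s @^-1` A]].

(* natural filtration; F_0 = sigma(empty) = {set0, setT} is trivial *)
Definition F (t : nat) : set (set Omega) := <<s gen t >>.

Definition genInf : set (set Omega) := \bigcup_t gen t.

Definition OmegaM : measurableType _ := @g_sigma_algebraType Omega genInf.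

Definition PM := probability OmegaM R.

Definition emeasurable_wrt (G : set (set Omega)) (f : Omega -> \bar R) :=
  forall B : set (\bar R), measurable B -> G (f @^-1` B).

Definition rmeasurable_wrt (G : set (set Omega)) (f : Omega -> R) :=
  forall B : set R, measurable B -> G (f @^-1` B).

(* g is a version of the conditional expectation E_P[Y | G] of a nonnegative
   (extended-real) variable Y; for nonnegative Y it always exists, with values in [0, +oo] *)
Definition is_condexp_nonneg (P : PM) (G : set (set Omega))
    (Y g : Omega -> \bar R) :=
  [/\ emeasurable_wrt G g, (forall w, (0 <= g w)%E) &
      forall B, G B -> (\int[P]_(w in (B : set OmegaM)) Y w = \int[P]_(w in B) g w)%E].

Definition condexp_le (P : PM) (G : set (set Omega)) (Y : Omega -> \bar R) (c : \bar R) :=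
  exists g, is_condexp_nonneg P G Y g /\ {ae P, forall w : OmegaM, (g w <= c)%E}.

(* m is a version of the (generalized) conditional expectation E_P[Y | G],
   which exists and is finite: E[Y^+|G] and E[Y^-|G] are a.s. finite and
   m = E[Y^+|G] - E[Y^-|G] a.s. *)
Definition is_condmean (P : PM) (G : set (set Omega)) (Y m : Omega -> R) :=
  rmeasurable_wrt G m /\
  exists gp gm : Omega -> \bar R,
    [/\ is_condexp_nonneg P G (fun w => (Num.max (Y w) 0)%:E) gp,
        is_condexp_nonneg P G (fun w => (Num.max (- Y w) 0)%:E) gm,
        {ae P, forall w : OmegaM, gp w < +oo}%E,
        {ae P, forall w : OmegaM, gm w < +oo}%E &
        {ae P, forall w : OmegaM, (m w)%:E = (gp w - gm w)%E}].

(* P in P^dagger; mu t is mu_t = E[X_t | F_{t-1}] (mu 0 unused) *)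
Definition Pdagger : set PM :=
  [set P | exists mu : nat -> Omega -> R, forall t, (1 <= t)%N ->
     [/\ is_condmean P (F t.-1) (X t) (mu t),
         {ae P, forall w : OmegaM, \sum_(1 <= i < t.+1) mu i w <= 0} &
         forall lam : R, condexp_le P (F t.-1)
            (fun w => (expR (lam * (X t w - mu t w)))%:E) (expR (lam ^+ 2 / 2))%:E]].

Definition Ple0 : set PM :=
  [set P | exists mu : nat -> Omega -> R, forall t, (1 <= t)%N ->
     [/\ is_condmean P (F t.-1) (X t) (mu t),
         {ae P, forall w : OmegaM, mu t w <= 0} &
         forall lam : R, condexp_le P (F t.-1)
            (fun w => (expR (lam * (X t w - mu t w)))%:E) (expR (lam ^+ 2 / 2))%:E]].

(* stopping times with values in N_0 U {oo}; None = oo *)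
Definition stopping_time (tau : Omega -> option nat) :=
  forall n, F n [set w | tau w = Some n].

Definition finite_tau (tau : Omega -> option nat) : set Omega :=
  [set w | tau w != None].

Definition mu_star (Q : set PM) (B : set Omega) : \bar R :=
  ereal_inf [set x | exists tau, [/\ stopping_time tau, B `<=` finite_tau tau &
     x = ereal_sup [set y | exists P : PM, Q P /\ y = P (finite_tau tau : set OmegaM)]]].

Definition Apos : set Omega :=
  [set w | (0 < limn_esup (fun n : nat =>
      ((n.+1)%:R^-1 * \sum_(1 <= s < n.+2) X s w)%:E))%E].

End Defs.

From mathcomp Require Import all_boot all_order all_algebra.
From mathcomp Require Import all_classical all_reals all_analysis.
From mathcomp Require Import measurable_realfun.
From mathcomp Require Import lra.
Set Implicit Arguments. Unset Strict Implicit. Unset Printing Implicit Defensive.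
Import Order.TTheory GRing.Theory Num.Theory HBNNSimple.
Local Open Scope classical_set_scope.
Local Open Scope ring_scope.
Local Open Scope ereal_scope.

(* For lam >= 0 and P in P^dagger, M_t = exp(sum_(s <= t) (lam (X_s - mu_s) - lam^2 / 2))
   is a nonnegative supermartingale started at 1, so by Ville's inequality it ever reaches
   a level a with probability at most 1/a; since sum_(s <= t) mu_s <= 0, M_t dominates
   exp(lam S_t - lam^2 t / 2).  On A^{>0} the averages S_t / t exceed some c > 0 infinitely
   often, so for lam <= c the latter process is unbounded.  Hence the first time at which
   exp(lam_k S_t - lam_k^2 t / 2) reaches 2^(k+1) / eps for some k, with lam_k = 1/(k+1),
   is a stopping time that is finite on A^{>0}, and finite with probability at most
   sum_k eps / 2^(k+1) = eps under every P in P^dagger. *)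

Section integral_sub_sigma.
Context d (T : measurableType d) (R : realType) (mu : {measure set T -> \bar R}).

Lemma cst_mul_measure_le_integral (D : set T) (g : T -> R) (a : R) :
  measurable D -> measurable_fun D g -> (0 <= a)%R -> (forall x, D x -> a <= g x)%R ->
  a%:E * mu D <= \int[mu]_(x in D) (g x)%:E.
Proof.
move=> mD mg a0 ag; rewrite -integral_cst//; apply: ge0_le_integral => //.
exact/measurable_EFinP.
Qed.

Lemma ge0_integral_setIC (D A : set T) (f : T -> \bar R) :
  measurable D -> measurable A -> measurable_fun D f -> (forall x, D x -> 0 <= f x) ->
  \int[mu]_(x in D) f x = \int[mu]_(x in D `&` A) f x + \int[mu]_(x in D `&` ~` A) f x.
Proof.
move=> mD mA mf f0; have DE : D = (D `&` A) `|` (D `&` ~` A).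
  by rewrite -setIUr setUCr setIT.
rewrite {1}DE ge0_integral_setU -?DE//; first exact: measurableI.
- by apply: measurableI => //; exact: measurableC.
- by apply/disj_set2P; rewrite setIACA setICr setI0.
Qed.

Lemma le_measure_ae (A B : set T) : measurable A -> measurable B ->
  {ae mu, forall x, A x -> B x} -> mu A <= mu B.
Proof.
move=> mA mB [N [mN N0 sN]]; apply: (@le_trans _ _ (mu (B `|` N))).
  apply: le_measure; rewrite ?inE//; first exact: measurableU.
  move=> x Ax; have [Bx|nBx] := pselect (B x); [by left|right].
  by apply: sN => /(_ Ax).
apply: (le_trans (measureU2 _ mB mN)).
have muN0 : mu N <= 0 by rewrite le_eqVlt; apply/orP; left; apply/eqP.
by rewrite -[leRHS]adde0 leeD2l.
Qed.

Variable G : set (set T).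
Hypothesis G_measurable : G `<=` measurable.
Local Notation TG := (g_sigma_algebraType G).

Lemma sub_sigma_measurable (A : set T) : <<s G >> A -> measurable A.
Proof. by apply: smallest_sub => //; exact: sigma_algebra_measurable. Qed.

Lemma measurable_fun_sub_sigma d' (U : measurableType d') (f : T -> U) :
  measurable_fun setT (f : TG -> U) -> measurable_fun setT f.
Proof.
move=> mf _ B mB; rewrite setTI; apply: sub_sigma_measurable.
by have := mf measurableT B mB; rewrite setTI.
Qed.

Lemma sigma_preimage1 (h : {mfun TG >-> R}) (y : R) : <<s G >> (h @^-1` [set y]).
Proof. exact: (@measurable_funPTI _ _ TG _ h). Qed.

Lemma integral_nnsfun_mul (h : {nnsfun TG >-> R}) (f : T -> R) :
  measurable_fun setT f -> (forall x, 0 <= f x)%R ->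
  \int[mu]_x (h x * f x)%:E =
  \sum_(y \in range h) y%:E * \int[mu]_(x in h @^-1` [set y]) (f x)%:E.
Proof.
move=> mf f0.
pose hf y (x : T) := (\1_(h @^-1` [set y]) x * f x)%R.
have mhf y : measurable_fun setT (fun x => (hf y x)%:E).
  apply/measurable_EFinP; apply: measurable_funM => //.
  by apply: measurable_indic; apply: sub_sigma_measurable; exact: sigma_preimage1.
have hf0 y x : 0 <= (hf y x)%:E by rewrite lee_fin mulr_ge0.
transitivity (\int[mu]_x (\sum_(y \in range h) y%:E * (hf y x)%:E)).
  apply: eq_integral => x _; rewrite fsumEFin//; congr EFin.
  rewrite {1}fimfunE mulrC mulr_fsumr; apply: eq_fsbigr => y _.
  by rewrite /hf mulrC -mulrA.
rewrite ge0_integral_fsum//; last first.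
  move=> y x _; rewrite /hf indicE; have [|_] := boolP (x \in _).
    by rewrite inE /= => <-; rewrite mule_ge0 ?lee_fin ?mul1r.
  by rewrite mul0r mule0.
- by move=> y; apply: emeasurable_funM => //; exact: measurable_cst.
apply: eq_fsbigr => y; rewrite inE => -[x0 _ <-].
rewrite ge0_integralZl ?lee_fin//; congr (_ * _).
rewrite [RHS]integral_mkcond; apply: eq_integral => x _.
by rewrite /patch /hf indicE; case: (x \in _); rewrite ?mul1r ?mul0r.
Qed.

(* The hypothesis on [f] says E[f | <<s G>>] <= c.  The bound is first proved for simple
   [Y], then passed to the limit by monotone convergence. *)
Lemma ge0_integral_mul_le_setwise (Y f : T -> R) (c : R) :
  measurable_fun setT (Y : TG -> R) -> (forall x, 0 <= Y x)%R ->
  measurable_fun setT f -> (forall x, 0 <= f x)%R -> (0 <= c)%R ->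
  (forall C, <<s G >> C -> \int[mu]_(x in C) (f x)%:E <= c%:E * mu C) ->
  \int[mu]_x (Y x * f x)%:E <= c%:E * \int[mu]_x (Y x)%:E.
Proof.
move=> mY Y0 mf f0 c0 hC.
have mYe : measurable_fun setT ((fun x => (Y x)%:E) : TG -> \bar R).
  exact/measurable_EFinP.
have Ye0 x : setT x -> 0 <= (Y x)%:E by rewrite lee_fin.
pose h := nnsfun_approx (measurableT : measurable (setT : set TG)) mYe.
have hY n x : (h n x <= Y x)%R.
  by rewrite -lee_fin /h nnsfun_approxE; exact: le_approx.
have mh n : measurable_fun setT (h n : T -> R).
  exact/measurable_fun_sub_sigma/measurable_funPT.
have mY' : measurable_fun setT Y by exact: measurable_fun_sub_sigma.
have h_nd x m n : (m <= n)%N -> (h m x <= h n x)%R.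
  by move=> mn; have /lefP := nd_nnsfun_approx measurableT mYe mn; apply.
have step n : \int[mu]_x (h n x * f x)%:E <= c%:E * \int[mu]_x (Y x)%:E.
  apply: (@le_trans _ _ (\int[mu]_x (h n x * c)%:E)).
    rewrite integral_nnsfun_mul// (@integral_nnsfun_mul (h n) (fun=> c))//.
    apply: lee_fsum => // y /= [x0 _ <-]; apply: lee_wpmul2l; first by rewrite lee_fin.
    rewrite integral_cst; first by apply: hC; exact: sigma_preimage1.
    by apply: sub_sigma_measurable; exact: sigma_preimage1.
  under eq_integral do rewrite EFinM muleC.
  rewrite ge0_integralZl//; last 2 first.
  - exact/measurable_EFinP.
  - by move=> x _; rewrite lee_fin.
  apply: lee_wpmul2l; first by rewrite lee_fin.
  apply: ge0_le_integral => //; last by move=> x _; rewrite lee_fin hY.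
  - by move=> x _; rewrite lee_fin.
  - exact/measurable_EFinP.
  - exact/measurable_EFinP.
have -> : \int[mu]_x (Y x * f x)%:E = \int[mu]_x limn (fun n => (h n x * f x)%:E).
  apply: eq_integral => x _; apply/esym/cvg_lim => //.
  under eq_fun do rewrite EFinM.
  by rewrite EFinM; apply: cvgeZr => //; exact: cvg_nnsfun_approx.
rewrite monotone_convergence//; last 3 first.
- by move=> n; exact/measurable_EFinP/measurable_funM.
- by move=> n x _; rewrite lee_fin mulr_ge0.
- by move=> x _ m n mn; rewrite lee_fin ler_wpM2r// h_nd.
apply: lime_le; last exact: nearW.
apply: ereal_nondecreasing_is_cvgn => m n mn; apply: ge0_le_integral => //.
- by move=> x _; rewrite lee_fin mulr_ge0.
- exact/measurable_EFinP/measurable_funM.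
- exact/measurable_EFinP/measurable_funM.
- by move=> x _; rewrite lee_fin ler_wpM2r// h_nd.
Qed.

End integral_sub_sigma.

Lemma lt_limn_esup_frequently (R : realType) (u : (\bar R)^nat) (x : \bar R) :
  x < limn_esup u -> forall N, exists2 n, (N <= n)%N & x < u n.
Proof.
move=> xu N; have : x < esups u N.
  apply: (lt_le_trans xu); rewrite limn_esup_lim (cvg_lim _ (@cvg_esups_inf _ u))//.
  by apply: ereal_inf_lbound; exists N.
by move=> /ereal_sup_gt [_ [n Nn <-] xun]; exists n.
Qed.

Lemma expR_drift_ge (R : realType) (lam c A m S : R) :
  (0 < lam)%R -> (lam <= c)%R -> (0 < m)%R -> (c * m < S)%R -> (2 * A < lam * c * m)%R ->
  (A <= expR (lam * S - lam ^+ 2 * m / 2))%R.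
Proof.
move=> lam0 lamc m0 cmS Am; apply: le_trans (expR_ge1Dx _).
have h1 : (lam * (c * m) <= lam * S)%R by rewrite ler_pM2l// ltW.
have h2 : (lam * lam * m <= lam * c * m)%R by rewrite ler_pM2r// ler_pM2l.
move: h1 h2 Am; rewrite expr2 mulrA; lra.
Qed.

Definition hitting_time {T} (E : nat -> set T) (w : T) : option nat :=
  if pselect (exists m, `[< E m w >]) is left h then Some (ex_minn h) else None.

Lemma hitting_timeE T (E : nat -> set T) n : [set w | hitting_time E w = Some n] =
  E n `&` ~` \bigcup_(m in [set m | (m < n)%N]) E m.
Proof.
apply/seteqP; split => w /=; rewrite /hitting_time.
  case: pselect => // h [<-]; case: ex_minnP => m /asboolP Em mmin; split => //.
  by move=> [j /= jm /asboolP /mmin]; rewrite leqNgt jm.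
move=> [En nE]; case: pselect => [h|]; last by case; exists n; exact/asboolP.
case: ex_minnP => m /asboolP Em mmin; congr Some; apply/eqP.
rewrite eqn_leq mmin ?andbT; last exact/asboolP.
by rewrite leqNgt; apply/negP => mn; apply: nE; exists m.
Qed.

Lemma hitting_time_finite T (E : nat -> set T) :
  [set w | hitting_time E w != None] = \bigcup_m E m.
Proof.
apply/seteqP; split => w /=; rewrite /hitting_time.
  by case: pselect => // -[m /asboolP h] _; exists m.
by move=> [m _ h]; case: pselect => // -[]; exists m; exact/asboolP.
Qed.

Section filtration.
Variable R : realType.
Local Notation Omega := (Omega0 R).
Local Notation OM := (OmegaM R).
Local Notation Ft t := (g_sigma_algebraType (@gen R t)).

Lemma gen_le s t : (s <= t)%N -> @gen R s `<=` @gen R t.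
Proof. by move=> st B [u [A [u1 ut mA ->]]]; exists u, A; split => //; exact: leq_trans st. Qed.

Lemma F_le s t : (s <= t)%N -> @F R s `<=` @F R t.
Proof. by move=> st; apply: sub_sigma_algebra2; exact: gen_le. Qed.

Lemma gen_measurable t : @gen R t `<=` (measurable : set (set OM)).
Proof. by move=> A gA; apply: sub_sigma_algebra; exists t. Qed.

Lemma F_measurable t (A : set Omega) : @F R t A -> measurable (A : set OM).
Proof. exact: (sub_sigma_measurable (T := OM) (@gen_measurable t)). Qed.

Lemma measurable_fun_F d (U : measurableType d) t (f : Omega -> U) :
  measurable_fun setT (f : Ft t -> U) -> measurable_fun setT (f : OM -> U).
Proof. exact: (measurable_fun_sub_sigma (T := OM) (@gen_measurable t)). Qed.

Lemma measurable_fun_F_le d (U : measurableType d) s t (f : Omega -> U) : (s <= t)%N ->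
  measurable_fun setT (f : Ft s -> U) -> measurable_fun setT (f : Ft t -> U).
Proof.
move=> st mf _ B mB; rewrite setTI; apply: (F_le st).
by have := mf measurableT B mB; rewrite setTI.
Qed.

Lemma rmeasurable_wrtP t (f : Omega -> R) :
  rmeasurable_wrt (@F R t) f <-> measurable_fun setT (f : Ft t -> R).
Proof.
by split => mf; [move=> _ B mB; rewrite setTI; exact: mf|move=> B /(mf measurableT); rewrite setTI].
Qed.

Lemma emeasurable_wrtP t (f : Omega -> \bar R) :
  emeasurable_wrt (@F R t) f <-> measurable_fun setT (f : Ft t -> \bar R).
Proof.
by split => mf; [move=> _ B mB; rewrite setTI; exact: mf|move=> B /(mf measurableT); rewrite setTI].
Qed.

Lemma measurable_coord t i : (i < t)%N ->
  measurable_fun setT ((fun w : Omega => w i) : Ft t -> R).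
Proof. by move=> it _ B mB; rewrite setTI; apply: sub_sigma_algebra; exists i.+1, B. Qed.

Lemma measurable_coordT i : measurable_fun setT ((fun w : Omega => w i) : OM -> R).
Proof. exact: measurable_fun_F (measurable_coord (ltnSn i)). Qed.

End filtration.

Section exp_supermartingale.
Variables (R : realType) (P : PM R) (mu : nat -> Omega0 R -> R) (lam : R).
Hypothesis lam_ge0 : (0 <= lam)%R.
Hypothesis mu_measurable : forall t, rmeasurable_wrt (@F R t) (mu t.+1).
Hypothesis cond_mgf : forall t, condexp_le P (@F R t)
  (fun w => (expR (lam * (X t.+1 w - mu t.+1 w)))%:E) (expR (lam ^+ 2 / 2))%:E.
Local Notation Omega := (Omega0 R).
Local Notation OM := (OmegaM R).
Local Notation Ft t := (g_sigma_algebraType (@gen R t)).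

(* Since [w i] is X_(i+1), this is exp(sum_(s <= t) (lam (X_s - mu_s) - lam^2 / 2)). *)
Definition expmart t (w : Omega) : R :=
  expR (\sum_(i < t) (lam * (w i - mu i.+1 w) - lam ^+ 2 / 2)).

Lemma expmart_ge0 t w : (0 <= expmart t w)%R.
Proof. exact: expR_ge0. Qed.

Lemma measurable_expmart t : measurable_fun setT (expmart t : Ft t -> R).
Proof.
apply: measurableT_comp => //; apply: measurable_sum => i.
apply: measurable_funB => //; apply: measurable_funM => //.
apply: measurable_funB; first exact: measurable_coord.
by apply: (measurable_fun_F_le (ltnW (ltn_ord i))); apply/rmeasurable_wrtP.
Qed.

Lemma measurable_expmartT t : measurable_fun setT (fun w : OM => (expmart t w)%:E).
Proof. by apply/measurable_EFinP; apply: measurable_fun_F; exact: measurable_expmart. Qed.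

Lemma expmart_level_F t (a : R) : @F R t [set w | a <= expmart t w]%R.
Proof.
have := @measurable_expmart t measurableT _ (measurable_itv `[a, +oo[).
by rewrite setTI; congr (_ _); apply/seteqP; split => w /=; rewrite in_itv /= andbT.
Qed.

Lemma integral_exp_increment_le t C : @F R t C ->
  \int[P]_(w in (C : set OM)) (expR (lam * (w t - mu t.+1 w)))%:E
     <= (expR (lam ^+ 2 / 2))%:E * P C.
Proof.
move=> FC; have [g [[/emeasurable_wrtP mg g0 eqg] gle]] := cond_mgf t.
rewrite (eqg C FC) -integral_cst; last exact: F_measurable FC.
apply: ae_ge0_le_integral => //; first exact: F_measurable FC.
- by apply: measurable_funTS; exact: measurable_fun_F mg.
- by move=> w _; rewrite lee_fin expR_ge0.
- by apply: filterS gle => w + _.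
Qed.

(* The one-step factor is exp(lam (X - mu) - lam^2/2), whose conditional
   expectation is at most 1 by [cond_mgf]. *)
Lemma expmart_supermartingale t C : @F R t C ->
  \int[P]_(w in (C : set OM)) (expmart t.+1 w)%:E
    <= \int[P]_(w in (C : set OM)) (expmart t w)%:E.
Proof.
move=> FC; have mC := F_measurable FC.
pose f w := expR (lam * (w t - mu t.+1 w)).
pose Y w := (\1_C w * expmart t w)%R.
have mf : measurable_fun setT (f : OM -> R).
  apply: measurableT_comp => //; apply: measurable_funM => //.
  apply: measurable_funB; first exact: measurable_coordT.
  by apply: measurable_fun_F; apply/rmeasurable_wrtP.
have mY : measurable_fun setT (Y : Ft t -> R).
  by apply: measurable_funM; [exact: measurable_indic|exact: measurable_expmart].
have Y0 w : (0 <= Y w)%R by rewrite mulr_ge0 ?expmart_ge0.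
have := ge0_integral_mul_le_setwise (T := OM) (@gen_measurable R t) mY Y0 mf
  (fun w => expR_ge0 _) (expR_ge0 _) (@integral_exp_increment_le t).
have -> : \int[P]_(w in (C : set OM)) (expmart t w)%:E = \int[P]_w (Y w)%:E.
  rewrite integral_mkcond; apply: eq_integral => w _.
  by rewrite /patch /Y indicE; case: (w \in C); rewrite ?mul1r ?mul0r.
have -> : \int[P]_(w in (C : set OM)) (expmart t.+1 w)%:E =
    \int[P]_w (Y w * f w)%:E * (expR (- (lam ^+ 2 / 2)))%:E.
  rewrite -ge0_integralZr//; last 2 first.
  - by apply/measurable_EFinP; apply: measurable_funM => //; exact: measurable_fun_F mY.
  - by move=> w _; rewrite lee_fin mulr_ge0 ?expR_ge0.
  rewrite [LHS]integral_mkcond; apply: eq_integral => w _.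
  rewrite /patch /Y indicE; case: (w \in C); rewrite ?mul1r ?mul0r ?mul0e//.
  by rewrite -EFinM /expmart big_ord_recr /= /f -!expRD addrA.
have e0 : 0 <= (expR (- (lam ^+ 2 / 2)))%:E by rewrite lee_fin expR_ge0.
move=> /(lee_wpmul2r e0) /le_trans; apply.
by rewrite muleAC -EFinM -expRD subrr expR0 mul1e.
Qed.

Definition expmart_hits n a t :=
  [set w : Omega | exists2 s, (t <= s <= n)%N & (a <= expmart s w)%R].

Lemma measurable_expmart_hits n a t : measurable (expmart_hits n a t : set OM).
Proof.
have -> : expmart_hits n a t =
    \bigcup_(s in [set s | (t <= s <= n)%N]) [set w | a <= expmart s w]%R.
  by apply/seteqP; split => w /= [s]; exists s.
by apply: bigcup_measurable => s _; apply: F_measurable; exact: expmart_level_F.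
Qed.

Lemma expmart_hits_id a t : expmart_hits t a t = [set w | a <= expmart t w]%R.
Proof.
apply/seteqP; split => w /=; last by exists t; rewrite ?leqnn.
by move=> [s /andP[ts st]]; rewrite (_ : s = t) //; apply/eqP; rewrite eqn_leq st ts.
Qed.

Lemma expmart_hits_split n a t : expmart_hits n a t `<=`
  [set w | a <= expmart t w]%R `|` (~` [set w | a <= expmart t w]%R `&` expmart_hits n a t.+1).
Proof.
move=> w [s /andP[ts sn] ha]; have [|aN] := boolP (a <= expmart t w)%R; first by left.
right; split; first exact/negP.
by exists s; rewrite // sn andbT ltn_neqAle ts andbT; apply: contraNneq aN => ->.
Qed.

Lemma expmart_markov t a C : (0 <= a)%R -> @F R t C ->
  a%:E * P (C `&` [set w | a <= expmart t w]%R : set OM)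
    <= \int[P]_(w in (C `&` [set w | a <= expmart t w]%R : set OM)) (expmart t w)%:E.
Proof.
move=> a0 FC; apply: cst_mul_measure_le_integral => //; last by move=> w [].
  by apply: measurableI; apply: F_measurable; [exact: FC|exact: expmart_level_F].
by apply: measurable_funTS; apply: measurable_fun_F; exact: measurable_expmart.
Qed.

Lemma measure_expmart_hits_split n a t C : @F R t C ->
  P (C `&` expmart_hits n a t : set OM) <=
  P (C `&` [set w | a <= expmart t w]%R : set OM) +
  P (C `&` ~` [set w | a <= expmart t w]%R `&` expmart_hits n a t.+1 : set OM).
Proof.
move=> /F_measurable mC; set L := [set w | a <= expmart t w]%R.
have mL : measurable (L : set OM) by exact: F_measurable (@expmart_level_F t a).
have mCL : measurable (C `&` L : set OM) by exact: measurableI.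
have mCnLH : measurable (C `&` ~` L `&` expmart_hits n a t.+1 : set OM).
  apply: measurableI; last exact: measurable_expmart_hits.
  by apply: measurableI => //; exact: measurableC.
apply: le_trans (measureU2 _ mCL mCnLH); apply: le_measure; rewrite ?inE.
- by apply: measurableI => //; exact: measurable_expmart_hits.
- exact: measurableU.
by rewrite -setIA -setIUr; apply: setIS; exact: expmart_hits_split.
Qed.

(* Doob's maximal inequality, by backward induction on the starting time [t]. *)
Lemma expmart_maximal n a t C : (0 < a)%R -> (t <= n)%N -> @F R t C ->
  a%:E * P (C `&` expmart_hits n a t : set OM)
    <= \int[P]_(w in (C : set OM)) (expmart t w)%:E.
Proof.
move=> a0 tn; rewrite -(subnK tn); move: (n - t)%N => k.
elim: k t C {n tn} => [|k IH] t C FC; set L := [set w | a <= expmart t w]%R;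
  have [mC mL] := (F_measurable FC, F_measurable (@expmart_level_F t a)).
  rewrite add0n expmart_hits_id; apply: le_trans (expmart_markov (ltW a0) FC) _.
  apply: ge0_subset_integral => //; first exact: measurableI.
  - exact: measurable_funTS (measurable_expmartT _).
  - by move=> w _; rewrite lee_fin expmart_ge0.
have FCnL : @F R t (C `&` ~` L).
  by apply: (@measurableI _ (Ft t)) => //; apply: measurableC; exact: expmart_level_F.
rewrite addSnnS (ge0_integral_setIC _ mC mL); last 2 first.
- exact: measurable_funTS (measurable_expmartT _).
- by move=> w _; rewrite lee_fin expmart_ge0.
apply: le_trans (lee_wpmul2l _ (measure_expmart_hits_split _ _ FC)) _.
  by rewrite lee_fin ltW.
rewrite ge0_muleDr ?measure_ge0//; apply: leeD; first exact: expmart_markov (ltW a0) FC.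
apply: le_trans (expmart_supermartingale FCnL).
exact: IH (F_le (leqnSn t) FCnL).
Qed.

Lemma ville_expmart n a : (0 < a)%R -> P (expmart_hits n a 0 : set OM) <= (a^-1)%:E.
Proof.
move=> a0; rewrite -[(a^-1)%:E]mule1 lee_pdivlMl//.
have := @expmart_maximal n a 0 setT a0 (leq0n n) (@measurableT _ (Ft 0)).
rewrite setTI => /le_trans; apply; under eq_integral do rewrite /expmart big_ord0 expR0.
by rewrite integral_cst//= mul1e probability_setT.
Qed.

Lemma expmart_hits_le n m a t : (n <= m)%N -> expmart_hits n a t `<=` expmart_hits m a t.
Proof. by move=> nm w [s /andP[ts sn] ha]; exists s; rewrite // ts (leq_trans sn). Qed.

Lemma ville_expmart_bigcup a : (0 < a)%R ->
  P (\bigcup_n expmart_hits n a 0 : set OM) <= (a^-1)%:E.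
Proof.
move=> a0; have mH n := measurable_expmart_hits n a 0.
have nd : {homo (fun n => expmart_hits n a 0) : n m / (n <= m)%N >-> (n <= m)%O}.
  by move=> n m nm; apply/subsetPset; exact: expmart_hits_le.
have cvgH := @nondecreasing_cvg_mu _ _ _ P _ mH (bigcup_measurable (fun n _ => mH n)) nd.
rewrite -(cvg_lim _ cvgH)//; apply: lime_le; first by apply/cvg_ex; eexists; exact: cvgH.
by apply: nearW => n; exact: ville_expmart.
Qed.

Lemma exp_psum_le_expmart m w : (\sum_(i < m) mu i.+1 w <= 0)%R ->
  (expR (lam * \sum_(i < m) w i - lam ^+ 2 * m%:R / 2) <= expmart m w)%R.
Proof.
move=> mu_le0; rewrite ler_expR sumrB -mulr_sumr big_split /= sumrN sumr_const card_ord.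
have := mulr_ge0_le0 lam_ge0 mu_le0; rewrite -mulr_natr mulrDr; lra.
Qed.

End exp_supermartingale.

Section crossing.
Variable R : realType.
Local Notation Omega := (Omega0 R).
Local Notation OM := (OmegaM R).
Local Notation Ft t := (g_sigma_algebraType (@gen R t)).

Definition psum m (w : Omega) : R := \sum_(i < m) w i.

Definition crossing (lam a : R) m :=
  [set w : Omega | a <= expR (lam * psum m w - lam ^+ 2 * m%:R / 2)]%R.

Lemma crossing_F lam a m : @F R m (crossing lam a m).
Proof.
have mS : measurable_fun setT (psum m : Ft m -> R).
  by apply: measurable_sum => i; exact: measurable_coord.
have mf : measurable_fun setT
    ((fun w => expR (lam * psum m w - lam ^+ 2 * m%:R / 2)) : Ft m -> R).
  by apply: measurableT_comp => //; apply: measurable_funB => //; exact: measurable_funM.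
have := mf measurableT _ (measurable_itv `[a, +oo[).
by rewrite setTI; congr (_ _); apply/seteqP; split => w /=; rewrite in_itv /= andbT.
Qed.

Lemma measurable_crossing lam a m : measurable (crossing lam a m : set OM).
Proof. exact: F_measurable (@crossing_F lam a m). Qed.

(* Ville's inequality for the process exp(lam S_m - lam^2 m / 2), which is dominated by
   [expmart] as long as the running sums of the conditional means are nonpositive. *)
Lemma crossing_prob_le (P : PM R) (mu : nat -> Omega -> R) (lam a : R) :
  (0 <= lam)%R -> (0 < a)%R ->
  (forall t, rmeasurable_wrt (@F R t) (mu t.+1)) ->
  (forall t, condexp_le P (@F R t)
     (fun w => (expR (lam * (X t.+1 w - mu t.+1 w)))%:E) (expR (lam ^+ 2 / 2))%:E) ->
  (forall t, (1 <= t)%N -> {ae P, forall w : OM, \sum_(1 <= i < t.+1) mu i w <= 0}%R) ->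
  P (\bigcup_m crossing lam a m : set OM) <= (a^-1)%:E.
Proof.
move=> lam0 a0 mu_meas cond_mgf mu_le0.
apply: le_trans (ville_expmart_bigcup mu_meas cond_mgf a0).
apply: le_measure_ae.
- by apply: bigcup_measurable => m _; exact: measurable_crossing.
- by apply: bigcup_measurable => n _; exact: measurable_expmart_hits.
have : {ae P, forall w : OM, forall t, (1 <= t)%N -> \sum_(1 <= i < t.+1) mu i w <= 0}%R.
  apply: ae_foralln => -[|t]; first exact: nearW.
  by apply: filterS (mu_le0 t.+1 isT) => w h _.
apply: filterS => w hw [m _ cw]; exists m => //; exists m; first by rewrite leq0n leqnn.
apply: le_trans cw (exp_psum_le_expmart lam0 _).
case: m => [|m]; first by rewrite big_ord0.
by have := hw m.+1 isT; rewrite big_add1 big_mkord.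
Qed.

End crossing.

Section stopping_rule.
Variable R : realType.
Local Notation Omega := (Omega0 R).
Local Notation OM := (OmegaM R).
Local Notation Ft t := (g_sigma_algebraType (@gen R t)).

Lemma psum_X n (w : Omega) : psum n.+1 w = (\sum_(1 <= s < n.+2) X s w)%R.
Proof. by rewrite /psum big_add1 /= big_mkord. Qed.

(* On [Apos] the averages exceed some [c > 0] infinitely often; then for [lam <= c] the
   exponent [lam S_m - lam^2 m / 2] grows at least like [lam c m / 2]. *)
Lemma Apos_crossing (A : nat -> R) w : @Apos R w ->
  exists k m, crossing (k.+1%:R^-1) (A k) m w.
Proof.
rewrite /Apos /=; set u := (fun n : nat => _) => u_pos.
have [c c0 cu] : exists2 c : R, (0 < c)%R & c%:E < limn_esup u.
  move: u_pos; case: (limn_esup u) => [r| |]// r0; last by exists 1%R; rewrite ?ltry.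
  by exists (r / 2)%R; rewrite ?lte_fin; move: r0; rewrite lte_fin; lra.
have [k] := ltr_add_invr c0; rewrite add0r => lamc.
have lam0 : (0 < k.+1%:R^-1 :> R)%R by rewrite invr_gt0.
have [N _ hN] := nbhs_infty_gtr (2 * A k / (k.+1%:R^-1 * c))%R.
have [n Nn] := lt_limn_esup_frequently cu N.
rewrite /u lte_fin -psum_X ltr_pdivlMl// => cS.
exists k, n.+1; apply: (expR_drift_ge (c := c)) => //; first exact: ltW.
  by rewrite mulrC.
by rewrite -ltr_pdivrMl ?mulr_gt0// mulrC; apply: hN; rewrite /= leqW.
Qed.

Lemma stopping_time_hitting (E : nat -> set Omega) :
  (forall m, @F R m (E m)) -> stopping_time (hitting_time E).
Proof.
move=> FE n; rewrite hitting_timeE; apply: (@measurableI _ (Ft n)); first exact: FE.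
apply: measurableC; apply: bigcup_measurable => m /= mn.
exact: (F_le (ltnW mn)) (FE m).
Qed.

(* The levels 2^(k+1) / eps are chosen so that their reciprocals sum to eps. *)
Definition crossing_some (eps : R) m :=
  [set w | exists k, crossing (k.+1%:R^-1) ((2 ^ k.+1)%:R / eps) m w].

Definition stop_rule eps := hitting_time (crossing_some eps).

Lemma stopping_time_stop_rule eps : stopping_time (stop_rule eps).
Proof.
apply: stopping_time_hitting => m.
rewrite (_ : crossing_some eps m =
    \bigcup_k crossing (k.+1%:R^-1) ((2 ^ k.+1)%:R / eps) m).
  by apply: (@bigcup_measurable _ (Ft m)) => k _; exact: crossing_F.
by apply/seteqP; split => w /= [k]; [exists k|move=> _; exists k].
Qed.

Lemma Apos_sub_stop_rule eps : @Apos R `<=` finite_tau (stop_rule eps).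
Proof.
move=> w /(Apos_crossing (fun k => (2 ^ k.+1)%:R / eps)%R) [k [m h]].
by rewrite /finite_tau hitting_time_finite; exists m => //; exists k.
Qed.

Lemma Pdagger_stop_rule_le (eps : R) (P : PM R) : (0 < eps)%R -> @Pdagger R P ->
  P (finite_tau (stop_rule eps) : set OM) <= eps%:E.
Proof.
move=> e0 [mu Pmu].
have mu_meas t : rmeasurable_wrt (@F R t) (mu t.+1) by have [[]] := Pmu t.+1 isT.
have cond_mgf lam t : condexp_le P (@F R t)
    (fun w => (expR (lam * (X t.+1 w - mu t.+1 w)))%:E) (expR (lam ^+ 2 / 2))%:E.
  by have [_ _] := Pmu t.+1 isT; apply.
have mu_le0 t : (1 <= t)%N -> {ae P, forall w : OM, \sum_(1 <= i < t.+1) mu i w <= 0}%R.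
  by move=> t1; have [] := Pmu t t1.
pose G k := \bigcup_m crossing (k.+1%:R^-1) ((2 ^ k.+1)%:R / eps) m.
have mG k : measurable (G k : set OM).
  by apply: bigcup_measurable => m _; exact: measurable_crossing.
rewrite (_ : finite_tau _ = \bigcup_k G k); last first.
  rewrite /finite_tau hitting_time_finite; apply/seteqP; split => w /=.
    by move=> [m _ [k h]]; exists k => //; exists m.
  by move=> [k _ [m _ h]]; exists m => //; exists k.
apply: le_trans
  (measure_sigma_subadditive P mG (bigcup_measurable (fun k _ => mG k)) (@subset_refl _ _)) _.
apply: le_trans (epsilon_trick0 xpredT (ltW e0)); apply: lee_nneseries => // k _.
rewrite -[X in (X / _)%R]invrK -invfM mulrC.
by apply: crossing_prob_le => //; rewrite divr_gt0 // ltr0n expn_gt0.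
Qed.

End stopping_rule.

Section families.
Variable R : realType.
Local Notation Omega := (Omega0 R).
Local Notation OM := (OmegaM R).

Lemma Ple0_sub_Pdagger : @Ple0 R `<=` @Pdagger R.
Proof.
move=> P [mu Pmu]; exists mu => t t1; have [? _ ?] := Pmu t t1; split => //.
have : {ae P, forall w : OM, forall i, (1 <= i)%N -> mu i w <= 0}%R.
  apply: ae_foralln => -[|i]; first exact: nearW.
  by have [_ + _] := Pmu i.+1 isT; apply: filterS => w h _.
apply: filterS => w mu_le0; rewrite big_nat; apply: sumr_le0 => i /andP[i1 _].
exact: mu_le0.
Qed.

Definition dirac_path (x0 : OM) : PM R := @dirac _ OM x0 R.

Lemma is_condexp_dirac_path t (x0 : OM) (Y : Omega -> \bar R) :
  measurable_fun setT (Y : OM -> \bar R) -> 0 <= Y x0 ->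
  is_condexp_nonneg (dirac_path x0) (@F R t) Y (fun=> Y x0).
Proof.
move=> mY Y0; split => //; first exact/emeasurable_wrtP/measurable_cst.
move=> B FB; have mB := F_measurable FB.
by rewrite !integral_dirac//; exact: measurable_funTS mY.
Qed.

Lemma dirac_zero_Ple0 : @Ple0 R (dirac_path (fun=> 0%R)).
Proof.
have mX t : measurable_fun setT (X t : OM -> R) by exact: measurable_coordT.
have X0 t : X t (fun=> 0%R) = 0%R by [].
exists (fun _ _ => 0%R) => t t1; split.
- split; first exact/rmeasurable_wrtP/measurable_cst.
  exists (fun=> (Num.max (X t (fun=> 0%R)) 0)%:E), (fun=> (Num.max (- X t (fun=> 0%R)) 0)%:E).
  split.
  + apply: is_condexp_dirac_path; last by rewrite lee_fin le_max lexx orbT.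
    exact/measurable_EFinP/measurable_maxr.
  + apply: is_condexp_dirac_path; last by rewrite lee_fin le_max lexx orbT.
    by apply/measurable_EFinP; apply: measurable_maxr => //; exact: measurableT_comp.
  + by apply: aeW => w; exact: ltry.
  + by apply: aeW => w; exact: ltry.
  + by apply: aeW => w; rewrite X0 oppr0 maxxx subee.
- exact: aeW.
move=> lam; exists (fun=> (expR (lam * (X t (fun=> 0%R) - 0)))%:E); split.
  apply: is_condexp_dirac_path; last by rewrite lee_fin expR_ge0.
  apply/measurable_EFinP; apply: measurableT_comp => //.
  by apply: measurable_funM => //; exact: measurable_funB.
apply: aeW => w; rewrite X0 subrr mulr0 lee_fin expR0 -expR0 ler_expR.
by rewrite divr_ge0// sqr_ge0.
Qed.

Lemma mu_star_Apos (Q : set (PM R)) : Q `<=` @Pdagger R -> Q (dirac_path (fun=> 0%R)) ->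
  mu_star Q (@Apos R) = 0.
Proof.
move=> QD Qdirac; apply/eqP; rewrite eq_le; apply/andP; split.
  apply/lee_addgt0Pr => e e0; rewrite add0e; apply: ge_ereal_inf.
  exists (ereal_sup [set y | exists P : PM R, Q P /\ y = P (finite_tau (stop_rule e))]).
    by exists (stop_rule e); split; [exact: stopping_time_stop_rule|exact: Apos_sub_stop_rule|].
  by apply: ge_ereal_sup => y [P [QP ->]]; exact: Pdagger_stop_rule_le (QD _ QP).
(* Nonemptiness of [Q] keeps each supremum away from -oo. *)
apply/ereal_infP => x [tau [_ _ ->]].
apply: le_trans (ereal_sup_ubound _); last by exists (dirac_path (fun=> 0%R)).
exact: measure_ge0.
Qed.

End families.

Theorem mainTheorem13 (R : realType) :
  [/\ mu_star (@Pdagger R) (@Apos R) = 0%E,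
      @Ple0 R `<=` @Pdagger R &
      mu_star (@Ple0 R) (@Apos R) = 0%E].
Proof.
have Ple0_dirac := @dirac_zero_Ple0 R.
split; first exact: mu_star_Apos (@subset_refl _ _) (Ple0_sub_Pdagger Ple0_dirac).
- exact: Ple0_sub_Pdagger.
- exact: mu_star_Apos (@Ple0_sub_Pdagger R) Ple0_dirac.
Qed.
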